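(* Let $\mathcal{A}$ be a linear hyperplane arrangement in $\mathbb{R}^n$, $i\in\{0,\dots,k\}$, $P\in L(\mathcal{A}^{(k-i)})$ and $U\in\mathcal{S}_{i,P}$. Then $$L_U(\mathcal{A})=\{X\in L_{k-i}(\mathcal{A}):P\not\subseteq H(X)\},\qquad \{X\in L_{k-i}(\mathcal{A}):\Delta(U\cap(U^\perp+T^\perp))\in H(X)\}=\{X\in L_{k-i}(\mathcal{A}):P\subseteq H(X)\}.$$ In particular, $L_{U_1}(\mathcal{A})=L_{U_2}(\mathcal{A})$ for all $U_1,U_2\in\mathcal{S}_{i,P}$.
   Context: $T=\bigcap_{H\in\mathcal{A}}H$; $L(\mathcal{A})$ is the intersection lattice (incl. $\mathbb{R}^n$), $L_j(\mathcal{A})$ its elements of codimension $j$. Plücker coordinates $\Delta(W)=(\Delta_I(W))_{I\in\binom{[n]}{d}}$ for a $d$-dimensional $W$ ($\Delta_I$ = minor on columns $I$ of a row-basis matrix, up to scalar). For $X\in L_j(\mathcal{A})$, $H(X)=\{x\in\mathbb{R}^{\binom{[n]}{j}}:\sum_I(-1)^{j(j+1)/2+\sum_{i\in I}i}\Delta_{[n]\setminus I}(X)x_I=0\}$; $\mathcal{A}^{(j)}=\{H(X):X\in L_j(\mathcal{A})\}$. For a flat $P$ of an arrangement $\mathcal{B}$, $P^\circ=P\setminus\bigcup\{Q\in L(\mathcal{B}):Q\subsetneq P\}$. $\mathcal{S}_{i,P}=\{U\in\mathrm{Gr}(k,n):\dim(U\cap T)=i,\ \Delta(U\cap(U^\perp+T^\perp))\in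 P^\circ\}$. For $U$ with $\dim(U\cap T)=i$, $L_U(\mathcal{A})=\{X\in L_{k-i}(\mathcal{A}):X\oplus(U\cap(U^\perp+T^\perp))=\mathbb{R}^n\}$. *)

(* linear algebra over an ordered field via mxalgebra.
   Vectors of R^n are row vectors 'rV[R]_n; a linear subspace of R^n is
   represented by (the row space of) a square matrix 'M[R]_n. *)
From HB Require Import structures.
From mathcomp Require Import all_boot all_order all_algebra.
Set Implicit Arguments. Unset Strict Implicit. Unset Printing Implicit Defensive.
Import Order.TTheory GRing.Theory Num.Theory.
Local Open Scope ring_scope.

Definition dsub (n d : nat) := {I : {set 'I_n} | #|I| == d}.

(* Minor of a d x n matrix B on the columns I (listed in increasing order). *)
Definition minor (R : comNzRingType) (n d : nat) (B : 'M[R]_(d, n)) (I : dsub n d) : R :=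
  \det (colsub (fun t : 'I_d => enum_val (cast_ord (esym (eqP (valP I))) t)) B).

Lemma dsubC_proof (n j : nat) (I : dsub n j) : #|~: val I| == (n - j)%N.
Proof.
have hI : #|val I| = j := eqP (valP I).
move: (val I) hI => J hJ.
apply/eqP; have := cardsC J; rewrite hJ card_ord => e.
by rewrite -[in RHS]e addKn.
Qed.
Definition dsubC (n j : nat) (I : dsub n j) : dsub n (n - j)%N :=
  exist _ (~: val I) (dsubC_proof I).

(* A d x n matrix whose rows form a basis of the row space of W when
   d = \rank W: it is then literally row_base W (see rbase_row_base). *)
Definition rbase (R : fieldType) (n d : nat) (W : 'M[R]_n) : 'M[R]_(d, n) :=
  pid_mx d *m row_ebase W.
Lemma rbase_row_base (R : fieldType) (n : nat) (W : 'M[R]_n) :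
  rbase (\rank W) W = row_base W.
Proof. by []. Qed.

(* Pluecker coordinate vector Delta(W) in R^{binom([n], d)}, for dim W = d. *)
Definition plucker (R : fieldType) (n d : nat) (W : 'M[R]_n) : dsub n d -> R :=
  minor (rbase d W).
Arguments plucker {R n} d W.
Arguments rbase {R n} d W.

Definition perp (R : fieldType) (n : nat) (W : 'M[R]_n) : 'M[R]_n := kermx W^T.

Definition hyperplane_arrangement (R : fieldType) (n : nat) (A : seq 'M[R]_n) :=
  forall H, H \in A -> \rank H = n.-1.

Definition Tcap (R : fieldType) (n : nat) (A : seq 'M[R]_n) : 'M[R]_n :=
  (\bigcap_(H <- A) H)%MS.

(* X in L(A): X is the intersection of some subfamily of A (empty: R^n) *)
Definition flat (R : fieldType) (n : nat) (A : seq 'M[R]_n) (X : 'M[R]_n) : Prop :=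
  exists s : seq 'M[R]_n, {subset s <= A} /\ (X == \bigcap_(H <- s) H)%MS.

Definition flatj (R : fieldType) (n : nat) (A : seq 'M[R]_n) (j : nat) (X : 'M[R]_n) : Prop :=
  flat A X /\ \rank X = (n - j)%N.
Arguments flatj {R n} A j X.

(* H(X) in R^{binom([n], j)}, for X of codimension j; signs use 1-based indices *)
Definition Hpl (R : fieldType) (n j : nat) (X : 'M[R]_n) : (dsub n j -> R) -> Prop :=
  fun x => \sum_(I : dsub n j)
     (-1) ^+ ((j * j.+1)./2 + \sum_(a in val I) (val a).+1)
       * plucker (n - j)%N X (dsubC I) * x I = 0.
Arguments Hpl {R n} j X x.

(* P in L(A^{(j)}): P is the intersection of H(X) over finitely many X in L_j(A)
   (the empty intersection being the whole space). *)
Definition Pflat (R : fieldType) (n : nat) (A : seq 'M[R]_n) (j : nat)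
  (P : (dsub n j -> R) -> Prop) : Prop :=
  exists s : seq 'M[R]_n, (forall X, X \in s -> flatj A j X) /\
    (forall x, P x <-> (forall X, X \in s -> Hpl j X x)).
Arguments Pflat {R n} A j P.

Definition Pcirc (R : fieldType) (n : nat) (A : seq 'M[R]_n) (j : nat)
  (P : (dsub n j -> R) -> Prop) (x : dsub n j -> R) : Prop :=
  P x /\ forall Q, Pflat A j Q -> (forall y, Q y -> P y) -> (exists y, P y /\ ~ Q y) -> ~ Q x.
Arguments Pcirc {R n} A j P x.

Definition Wsp (R : fieldType) (n : nat) (U T : 'M[R]_n) : 'M[R]_n :=
  (U :&: (perp U + perp T))%MS.

Definition Sset (R : fieldType) (n : nat) (A : seq 'M[R]_n) (k i : nat)
  (P : (dsub n (k - i)%N -> R) -> Prop) (U : 'M[R]_n) : Prop :=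
  [/\ \rank U = k, \rank (U :&: Tcap A)%MS = i &
      Pcirc A (k - i)%N P (plucker (k - i)%N (Wsp U (Tcap A)))].

Definition LU (R : fieldType) (n : nat) (A : seq 'M[R]_n) (U X : 'M[R]_n) : Prop :=
  let W := Wsp U (Tcap A) in
  let k := \rank U in let i := \rank (U :&: Tcap A)%MS in
  [/\ flatj A (k - i)%N X, \rank (X :&: W)%MS = 0%N & \rank (X + W)%MS = n].

From HB Require Import structures.
From mathcomp Require Import all_boot all_order all_algebra.
From mathcomp Require Import zify ring.
From Stdlib Require Import Classical.
Import Order.TTheory GRing.Theory Num.Theory.
Local Open Scope ring_scope.
Set Implicit Arguments. Unset Strict Implicit. Unset Printing Implicit Defensive.

(* Let W = U ∩ (U^⊥ + T^⊥), of dimension k - i because no nonzero vector of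
   R^n is isotropic.  For X of codimension k - i, a generalized Laplace
   expansion identifies the linear form defining H(X), evaluated at Δ(W), with
   the determinant of a basis of W stacked on a basis of X; hence
   Δ(W) ∈ H(X) iff X + W ≠ R^n, and by a dimension count X ∈ L_U(A) iff
   Δ(W) ∉ H(X).  Since P ∩ H(X) is again a flat of A^(k-i) and Δ(W) ∈ P°,
   Δ(W) ∈ H(X) iff P ⊆ H(X).  This description of L_U(A) only involves P. *)

Local Notation ord_lt n := (relpre (@nat_of_ord n) ltn).

Lemma ord_lt_trans n : transitive (ord_lt n).
Proof. by move=> y x z; apply: ltn_trans. Qed.

Lemma sorted_enum_set n (S : {set 'I_n}) : sorted (ord_lt n) (enum S).
Proof.
rewrite /enum_mem; apply: sorted_filter; first exact: ord_lt_trans.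
by rewrite -enumT -sorted_map val_enum_ord iota_ltn_sorted.
Qed.

Lemma enum_imset_lift n (c : 'I_n) (S : {set 'I_n.-1}) :
  enum (lift c @: S) = map (lift c) (enum S).
Proof.
apply: (irr_sorted_eq (@ord_lt_trans n)) => [x|||x].
- exact: ltnn.
- exact: sorted_enum_set.
- rewrite sorted_map; apply: sub_sorted (sorted_enum_set S) => x y /=.
  by rewrite /bump; case: (leqP c x); case: (leqP c y) => /=; lia.
rewrite mem_enum; case: (unliftP c x) => [y ->|->].
  by rewrite (mem_imset _ _ (@lift_inj _ c)) (mem_map (@lift_inj _ c)) mem_enum.
apply/idP/idP; first by case/imsetP => y _ /eqP; rewrite (negPf (neq_lift _ _)).
by case/mapP => y _ /eqP; rewrite (negPf (neq_lift _ _)).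
Qed.

Lemma enum_setD1 n (S : {set 'I_n}) x : enum (S :\ x) = rem x (enum S).
Proof.
rewrite rem_filter ?enum_uniq // /enum_mem -filter_predI.
by apply: eq_filter => y /=; rewrite in_setD1.
Qed.

Lemma nth_rem_nth (T : eqType) (x0 : T) (s : seq T) t k :
  uniq s -> (t < size s)%N -> nth x0 (rem (nth x0 s t) s) k = nth x0 s (bump t k).
Proof.
move=> us ht; rewrite remE index_uniq // nth_cat size_take ht /bump.
case: (ltnP k t) => hk; first by rewrite nth_take // add0n.
by rewrite nth_drop add1n addSn subnKC.
Qed.

Lemma index_sorted_ord n (s : seq 'I_n) x : sorted (ord_lt n) s -> x \in s ->
  index x s = count (fun z : 'I_n => z < x)%N s.
Proof.
elim: s => [|y s IH] //= hs.
have /allP y_min := order_path_min (@ord_lt_trans n) hs.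
rewrite inE; case: (eqVneq y x) => [<- _|_ /= hx].
  rewrite ltnn (eq_in_count (a2 := pred0)) ?count_pred0 // => z /y_min /= yz.
  by rewrite ltnNge ltnW.
by rewrite IH ?(path_sorted hs) // [(y < x)%N](y_min x hx).
Qed.

Lemma index_enum_set n (S : {set 'I_n}) x : x \in S ->
  index x (enum S) = (\sum_(z in S) (z < x))%N.
Proof.
move=> xS; rewrite index_sorted_ord ?sorted_enum_set ?mem_enum //.
rewrite -sum1_count big_mkcond big_enum /=.
by apply: eq_bigr => z _; case: (z < x)%N.
Qed.

Lemma notin_imset_lift n (c : 'I_n) (S : {set 'I_n.-1}) : c \notin lift c @: S.
Proof. by apply/imsetP => -[y _ /eqP]; rewrite (negPf (neq_lift _ _)). Qed.

Lemma setC_imset_lift n (c : 'I_n) (S : {set 'I_n.-1}) :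
  lift c @: (~: S) = ~: (c |: lift c @: S).
Proof.
apply/setP => x; rewrite !inE; case: (unliftP c x) => [y ->|->].
  by rewrite !(mem_imset _ _ (@lift_inj _ c)) inE eq_sym (negPf (neq_lift _ _)).
by rewrite eqxx /=; apply/negbTE/notin_imset_lift.
Qed.

Section SetMinors.
Variable R : comNzRingType.

(* The minor on the columns [S]; junk value [0] when [#|S| <> j]. *)
Definition minorS n j (B : 'M[R]_(j, n)) (S : {set 'I_n}) : R :=
  if (insub S : option (dsub n j)) is Some J then minor B J else 0.

Lemma minorS_dsub n j (B : 'M[R]_(j, n)) (I : dsub n j) : minorS B (val I) = minor B I.
Proof. by rewrite /minorS valK. Qed.

Lemma minorSE n j (B : 'M[R]_(j, n)) (S : {set 'I_n}) (x0 : 'I_n) : #|S| = j ->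
  minorS B S = \det (\matrix_(r, s) B r (nth x0 (enum S) s)).
Proof.
move=> /eqP cardS; rewrite /minorS (insubT (fun S : {set 'I_n} => #|S| == j) cardS).
by congr (\det _); apply/matrixP => r s; rewrite !mxE (enum_val_nth x0).
Qed.

Lemma minorS_row0 n (B : 'M[R]_(0, n)) (S : {set 'I_n}) : #|S| = 0%N -> minorS B S = 1.
Proof.
move=> /eqP cardS; rewrite /minorS (insubT (fun S : {set 'I_n} => #|S| == 0%N) cardS).
exact: det_mx00.
Qed.

Lemma minorS_expand_row0 n j (B : 'M[R]_(j.+1, n)) (S : {set 'I_n}) : #|S| = j.+1 ->
  minorS B S = \sum_(c in S) (-1) ^+ index c (enum S) * B 0 c * minorS (row' 0 B) (S :\ c).
Proof.
move=> cardS; have [x0 _] : exists x0, x0 \in S by apply/card_gt0P; rewrite cardS.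
have size_enum : size (enum S) = j.+1 by rewrite -cardE.
rewrite (minorSE B x0 cardS) (expand_det_row _ ord0).
rewrite -[in RHS]big_enum [in RHS](big_nth x0) size_enum big_mkord; apply: eq_bigr => t _; rewrite /cofactor mxE.
have t_lt : (t < size (enum S))%N by rewrite size_enum.
have cS : nth x0 (enum S) t \in S by rewrite -mem_enum mem_nth.
rewrite index_uniq ?enum_uniq // add0n (minorSE _ x0); last first.
  by move: cardS; rewrite (cardsD1 (nth x0 (enum S) t)) cS add1n => -[].
rewrite mulrA [B _ _ * _]mulrC; congr (_ * _ * \det _).
by apply/matrixP => r s; rewrite !mxE enum_setD1 nth_rem_nth ?enum_uniq.
Qed.

Lemma minorS_col' n j (M : 'M[R]_(j, n)) (c : 'I_n) (S : {set 'I_n.-1}) :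
  minorS (col' c M) S = minorS M (lift c @: S).
Proof.
have card_lift : #|lift c @: S| = #|S| by rewrite card_imset //; apply: lift_inj.
have [cardS|/negPf cardS] := eqVneq #|S| j; last first.
  by rewrite /minorS !insubF ?card_lift.
case: j M cardS => [|j] M cardS; first by rewrite !minorS_row0 ?card_lift.
have [x0 _] : exists x0, x0 \in S by apply/card_gt0P; rewrite cardS.
rewrite (minorSE _ x0) // (minorSE _ (lift c x0)) ?card_lift //.
congr (\det _); apply/matrixP => r s.
by rewrite !mxE enum_imset_lift (nth_map x0) // -cardE cardS.
Qed.

End SetMinors.

Lemma sum_val_setU1_lift n (c : 'I_n) (S : {set 'I_n.-1}) :
  (\sum_(a in c |: lift c @: S) val a
     = c + \sum_(y in S) val y + \sum_(y in S) (c <= y))%N.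
Proof.
rewrite big_setU1 ?notin_imset_lift //= big_imset /=; last by move=> x y _ _; apply: lift_inj.
rewrite -addnA addnC -big_split /= addnC; congr (_ + _)%N.
by apply: eq_bigr => y _; rewrite /bump addnC.
Qed.

Lemma index_setU1_lift n (c : 'I_n) (S : {set 'I_n.-1}) :
  index c (enum (c |: lift c @: S)) = (\sum_(y in S) (y < c))%N.
Proof.
rewrite index_enum_set ?setU11 // big_setU1 ?notin_imset_lift //= ltnn add0n.
rewrite big_imset /=; last by move=> x y _ _; apply: lift_inj.
by apply: eq_bigr => y _; rewrite /bump; case: (leqP c y); lia.
Qed.

(* Inserting [c] shifts each element [>= c] up by one and puts [c] in
   position [#|{y in S | y < c}|]: the two parities add up to [c + #|S|]. *)
Lemma sign_setU1_lift (R : pzRingType) n j (c : 'I_n) (S : {set 'I_n.-1}) : #|S| = j ->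
  (-1) ^+ ((\sum_(a in c |: lift c @: S) val a)%N + 'C(j.+1, 2)) *
    (-1) ^+ index c (enum (c |: lift c @: S))
  = (-1) ^+ val c * (-1) ^+ ((\sum_(a in S) val a)%N + 'C(j, 2)) :> R.
Proof.
move=> cardS; rewrite -!exprD sum_val_setU1_lift index_setU1_lift binS bin1.
have : (\sum_(y in S) (c <= y) + \sum_(y in S) (y < c))%N = j.
  rewrite -cardS -big_split /= -sum1_card; apply: eq_bigr => y _.
  by case: (leqP c y); lia.
set u := (\sum_(y in S) (c <= y))%N; set v := (\sum_(y in S) (y < c))%N => uv.
set w := (\sum_(y in S) val y)%N.
have -> : (c + w + u + ('C(j, 2) + j) + v = c + (w + 'C(j, 2)) + j.*2)%N by lia.
by rewrite exprD -mul2n exprM expr2 mulrNN mulr1 expr1n mulr1.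
Qed.

Lemma sum_card_succ_setU1_lift (V : nmodType) n j (F : {set 'I_n} -> 'I_n -> V) :
  \sum_(S : {set 'I_n} | #|S| == j.+1) \sum_(c in S) F S c
  = \sum_(c : 'I_n) \sum_(S : {set 'I_n.-1} | #|S| == j) F (c |: lift c @: S) c.
Proof.
rewrite (exchange_big_dep xpredT) //=; apply: eq_bigr => c _.
rewrite (reindex_onto (fun S : {set 'I_n.-1} => c |: lift c @: S)
                      (fun S : {set 'I_n} => [set y | lift c y \in S])) /=.
  apply: eq_bigl => S; rewrite cardsU1 notin_imset_lift card_imset; last exact: lift_inj.
  rewrite setU11 eqSS andbT; case: eqP => //= _; apply/eqP/setP => y.
  by rewrite inE in_setU1 (mem_imset _ _ (@lift_inj _ c)) eq_sym (negPf (neq_lift _ _)).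
move=> S /andP[_ cS]; apply/setP => x; rewrite in_setU1.
case: (unliftP c x) => [y ->|->]; last by rewrite eqxx.
by rewrite eq_sym (negPf (neq_lift _ _)) (mem_imset _ _ (@lift_inj _ c)) inE.
Qed.

Lemma minorS_setT (R : comNzRingType) n (C : 'M[R]_n) : minorS C [set: 'I_n] = \det C.
Proof.
case: n C => [|n] C; first by rewrite minorS_row0 ?cards0 ?det_mx00 // cardsT card_ord.
rewrite (minorSE C ord0) ?cardsT ?card_ord //; congr (\det _).
by apply/matrixP => r s; rewrite mxE enum_setT -enumT nth_ord_enum.
Qed.

Lemma det_col_mx_laplace (R : comNzRingType) n j m (e : (j + m = n)%N)
    (B : 'M[R]_(j, n)) (C : 'M[R]_(m, n)) :
  \det (castmx (e, erefl n) (col_mx B C)) = \sum_(S : {set 'I_n} | #|S| == j)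
    (-1) ^+ ((\sum_(a in S) val a)%N + 'C(j, 2)) * minorS B S * minorS C (~: S).
Proof.
subst n; rewrite castmx_id.
elim: j B C => [|j IH] B C.
  rewrite (big_pred1 set0) => [|S]; last by rewrite cards_eq0.
  rewrite big_set0 minorS_row0 ?cards0 // setC0 minorS_setT !mul1r.
  congr (\det _); apply/matrixP => i k.
  have {1}-> : i = rshift 0 (i : 'I_m) :> 'I_(0 + m) by apply/val_inj.
  by rewrite col_mxEd.
rewrite (expand_det_row _ (lshift m ord0)).
under [RHS]eq_bigr => S /eqP cardS.
  rewrite (minorS_expand_row0 _ cardS) big_distrr big_distrl /=.
  over.
rewrite sum_card_succ_setU1_lift; apply: eq_bigr => c _.
rewrite col_mxEu /cofactor col'_col_mx row'Ku IH !big_distrr /=.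
apply: eq_bigr => S /eqP cardS.
have -> : row' ord0 (col' c B) = col' c (row' ord0 B) by apply/matrixP => r s; rewrite !mxE.
rewrite (minorS_col' (row' ord0 B) c S) (minorS_col' C c (~: S)) setC_imset_lift.
rewrite setU1K ?notin_imset_lift // add0n.
transitivity ((-1) ^+ ((\sum_(a in c |: lift c @: S) val a)%N + 'C(j.+1, 2)) *
    (-1) ^+ index c (enum (c |: lift c @: S)) *
    (B 0 c * minorS (row' 0 B) (lift c @: S) * minorS C (~: (c |: lift c @: S)))).
  by rewrite sign_setU1_lift //; ring.
ring.
Qed.

Lemma Hpl_plucker_det (F : fieldType) n j (X W : 'M[F]_n) (le_jn : (j <= n)%N) :
  \sum_(I : dsub n j) (-1) ^+ ((j * j.+1)./2 + \sum_(a in val I) (val a).+1)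
      * plucker (n - j) X (dsubC I) * plucker j W I
  = \det (castmx (subnKC le_jn, erefl n) (col_mx (rbase j W) (rbase (n - j) X))).
Proof.
rewrite det_col_mx_laplace (big_sub (fun S : {set 'I_n} => #|S| == j)).
apply: eq_bigr => I _; rewrite /plucker -!minorS_dsub /=.
have cardI : #|val I| = j by apply/eqP; exact: (valP I).
have -> : ((j * j.+1)./2 + \sum_(a in val I) (val a).+1
           = (\sum_(a in val I) val a + 'C(j, 2)) + j.*2)%N.
  have -> : (\sum_(a in val I) (val a).+1 = \sum_(a in val I) val a + #|val I|)%N.
    by rewrite -sum1_card -big_split /=; apply: eq_bigr => a _; rewrite addn1.
  rewrite [(j * j.+1)%N]mulnC -bin2 binS bin1; lia.
rewrite exprD -mul2n exprM expr2 mulrNN mulr1 expr1n mulr1; ring.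
Qed.

Lemma Hpl_plucker_rank (F : fieldType) n j (W X : 'M[F]_n) :
  \rank W = j -> \rank X = (n - j)%N ->
  Hpl j X (plucker j W) <-> \rank (X + W)%MS != n.
Proof.
move=> rkW rkX; have le_jn : (j <= n)%N by rewrite -rkW rank_leq_col.
rewrite /Hpl (Hpl_plucker_det X W le_jn).
set M := castmx _ _.
have rkM : \rank M = \rank (X + W)%MS.
  rewrite eqmx_cast -addsmxE addsmxC.
  apply/eqmx_rank/eqmxP/adds_eqmx; [rewrite -rkX | rewrite -rkW]; exact: eq_row_base.
have detM : (\det M != 0) = (\rank M == n) by rewrite -unitfE -unitmxE -row_free_unit.
by rewrite -rkM -detM; split => [->|/negPn/eqP]; rewrite ?eqxx.
Qed.

Section Perp.
Variables (F : fieldType) (n : nat).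
Implicit Types A B M : 'M[F]_n.

Lemma sub_perp_sym M A : (M <= perp A)%MS = (A <= perp M)%MS.
Proof. by rewrite /perp !sub_kermx -(inj_eq trmx_inj) trmx_mul trmxK trmx0. Qed.

Lemma mxrank_perp A : \rank (perp A) = (n - \rank A)%N.
Proof. by rewrite /perp mxrank_ker mxrank_tr. Qed.

Lemma perpS A B : (A <= B)%MS -> (perp B <= perp A)%MS.
Proof. by move=> sAB; rewrite sub_perp_sym (submx_trans sAB) // -sub_perp_sym. Qed.

Lemma cap_perp A B : (perp A :&: perp B == perp (A + B)%MS)%MS.
Proof.
apply/andP; split; last by rewrite sub_capmx (perpS (addsmxSl A B)) (perpS (addsmxSr A B)).
by rewrite sub_perp_sym addsmx_sub -!(sub_perp_sym (perp A :&: perp B)%MS) capmxSl capmxSr.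
Qed.

Lemma mxrank_adds_perp A B : \rank (perp A + perp B)%MS = (n - \rank (A :&: B))%N.
Proof.
have sum_cap_perp := mxrank_sum_cap (perp A) (perp B).
rewrite (eqmx_rank (cap_perp A B)) !mxrank_perp in sum_cap_perp.
have sum_cap := mxrank_sum_cap A B.
have := rank_leq_col (A + B)%MS; have := rank_leq_col A; have := rank_leq_col B.
have := rank_leq_col (A :&: B)%MS; lia.
Qed.

End Perp.

(* Over an ordered field no nonzero vector is isotropic. *)
Lemma mxrank_cap_perp (F : realFieldType) n (V : 'M[F]_n) : \rank (V :&: perp V)%MS = 0%N.
Proof.
set M := (V :&: perp V)%MS.
have := submx_trans (capmxSr V (perp V)) (perpS (capmxSl V (perp V))).
rewrite /perp sub_kermx => /eqP MMt.
suff -> : M = 0 by rewrite mxrank0.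
apply/matrixP => r s; rewrite mxE.
have := congr1 (fun Z : 'M[F]_n => Z r r) MMt; rewrite !mxE => /psumr_eq0P sq0.
have sq_ge0 (i : 'I_n) : true -> 0 <= M r i * M^T i r by rewrite mxE -expr2 sqr_ge0.
have /eqP := sq0 sq_ge0 s isT.
by rewrite mxE mulf_eq0 orbb => /eqP.
Qed.

Lemma mxrank_Wsp (F : realFieldType) n (U T : 'M[F]_n) :
  \rank (Wsp U T) = (\rank U - \rank (U :&: T))%N.
Proof.
set V := (U :&: T)%MS.
have perpV : (perp U + perp T == perp V)%MS.
  have sub_perpV : (perp U + perp T <= perp V)%MS.
    by rewrite addsmx_sub !perpS ?capmxSl ?capmxSr.
  by rewrite -(mxrank_leqif_eq sub_perpV).2 mxrank_adds_perp mxrank_perp.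
have -> : \rank (Wsp U T) = \rank (U :&: perp V)%MS.
  by apply/eqmx_rank/eqmxP/cap_eqmx => //; apply/eqmxP.
have := mxrank_sum_cap U (perp V); have := mxrank_sum_cap V (perp V).
rewrite mxrank_cap_perp !mxrank_perp.
have : (\rank (V + perp V) <= \rank (U + perp V))%N by rewrite mxrankS ?addsmxS ?capmxSl.
have := rank_leq_col (U + perp V)%MS; have := rank_leq_col V.
have : (\rank V <= \rank U)%N by rewrite mxrankS ?capmxSl.
lia.
Qed.

Lemma Pflat_capH (F : fieldType) n (A : seq 'M[F]_n) j P X :
  Pflat A j P -> flatj A j X -> Pflat A j (fun x => P x /\ Hpl j X x).
Proof.
case=> s [s_flats Ps] flatX; exists (X :: s); split.
  by move=> Y; rewrite inE => /orP[/eqP -> //|]; apply: s_flats.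
move=> x; rewrite Ps; split.
  by case=> Px HXx Y; rewrite inE => /orP[/eqP -> //|]; apply: Px.
by move=> HX; split=> [Y sY|]; apply: HX; rewrite inE ?sY ?orbT ?eqxx.
Qed.

Section FixedStratum.
Variables (R : realFieldType) (n k i : nat) (A : seq 'M[R]_n).
Variables (P : (dsub n (k - i) -> R) -> Prop) (U : 'M[R]_n).
Hypotheses (flatP : Pflat A (k - i) P) (SU : Sset A P U).

Local Notation W := (Wsp U (Tcap A)).

(* [P ∩ H(X)] is a flat of [A^(k-i)] containing [Δ(W) ∈ P°], so it cannot be a
   proper subflat of [P]. *)
Lemma plucker_Wsp_Hpl X : flatj A (k - i) X ->
  Hpl (k - i) X (plucker (k - i) W) <-> (forall x, P x -> Hpl (k - i) X x).
Proof.
case: SU => _ _ [PW Pmin] flatX; split=> [HW|]; last by apply.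
apply: NNPP => notPH; have [y notPHy] := not_all_ex_not _ _ notPH.
have [Py notHy] := imply_to_and _ _ notPHy.
apply: (Pmin _ (Pflat_capH flatP flatX) _ _ (conj PW HW)) => [x []//|].
by exists y; split=> // -[].
Qed.

Lemma LU_iff X :
  LU A U X <-> flatj A (k - i) X /\ ~ (forall x, P x -> Hpl (k - i) X x).
Proof.
case: (SU) => rkU rkUT _.
have rkW : \rank W = (k - i)%N by rewrite mxrank_Wsp rkU rkUT.
rewrite /LU rkU rkUT; split=> [[flatX _ rk_sum]|[flatX notH]].
  split=> // /(plucker_Wsp_Hpl flatX).
  by case: flatX => _ /(Hpl_plucker_rank rkW) ->; rewrite rk_sum eqxx.
have rk_sum : \rank (X + W)%MS = n.
  apply/eqP/negbNE/negP; case: (flatX) => _ /(Hpl_plucker_rank rkW) <-.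
  by move/(plucker_Wsp_Hpl flatX).
have le_kin : (k - i <= n)%N by rewrite -rkW rank_leq_col.
split=> //; have := mxrank_sum_cap X W; case: flatX => _ ->; rewrite rk_sum rkW; lia.
Qed.

End FixedStratum.

Theorem mainTheorem8 (R : realFieldType) (n k i : nat) (A : seq 'M[R]_n)
  (P : (dsub n (k - i) -> R) -> Prop) (U : 'M[R]_n) :
  hyperplane_arrangement A -> (i <= k)%N -> Pflat A (k - i) P -> Sset A P U ->
  [/\ (forall X, LU A U X <->
        flatj A (k - i) X /\ ~ (forall x, P x -> Hpl (k - i) X x)),
      (forall X, (flatj A (k - i) X /\
                  Hpl (k - i) X (plucker (k - i) (Wsp U (Tcap A)))) <->
        (flatj A (k - i) X /\ (forall x, P x -> Hpl (k - i) X x))) &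
      (forall U1 U2 : 'M[R]_n, Sset A P U1 -> Sset A P U2 ->
        forall X, LU A U1 X <-> LU A U2 X)].
Proof.
move=> _ _ flatP SU; split=> [X|X|U1 U2 SU1 SU2 X].
- exact: LU_iff.
- by split=> -[flatX H]; split=> //; apply/(plucker_Wsp_Hpl flatP SU flatX).
- by rewrite (LU_iff flatP SU1) (LU_iff flatP SU2).
Qed.
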